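(* Let $S$ be a nonempty complete lattice and let $F:S\to 2^S$ be a lower V-ascending correspondence such that for every $x\in S$, the value $F(x)$ is nonempty and chain-subcomplete downwards in $S$. Then $F$ has a least fixed point, i.e. the set $\{s\in S:s\in F(s)\}$ is nonempty and has a least element.
   Context: A poset $S$ is a complete lattice if every nonempty subset has a supremum and infimum in $S$. A subset $T\subset S$ is chain-subcomplete downwards in $S$ if for every nonempty chain $C\subset T$, $\inf_S C$ exists and belongs to $T$. A correspondence $F:S\to 2^S$ on a lattice $S$ is lower V-ascending if for all $x<x'$ in $S$ (strict inequality), every $y\in F(x)$ and every $y'\in F(x')$, one has $y\wedge y'\in F(x)$. *)

From mathcomp Require Import all_boot all_order.
Set Implicit Arguments. Unset Strict Implicit. Unset Printing Implicit Defensive.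
Import Order.TTheory.
Local Open Scope order_scope.

Section Defs.
Context {d : Order.disp_t} {T : latticeType d}.

Definition nonempty (A : T -> Prop) : Prop := exists x, A x.

Definition is_lower_bound (A : T -> Prop) (m : T) : Prop := forall a, A a -> m <= a.
Definition is_upper_bound (A : T -> Prop) (m : T) : Prop := forall a, A a -> a <= m.

Definition is_inf (A : T -> Prop) (m : T) : Prop :=
  is_lower_bound A m /\ forall l, is_lower_bound A l -> l <= m.
Definition is_sup (A : T -> Prop) (m : T) : Prop :=
  is_upper_bound A m /\ forall u, is_upper_bound A u -> m <= u.

Definition complete_lattice : Prop :=
  forall A : T -> Prop, nonempty A -> (exists s, is_sup A s) /\ (exists i, is_inf A i).

Definition is_chain (C : T -> Prop) : Prop :=
  forall a b, C a -> C b -> a <= b \/ b <= a.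

Definition chain_subcomplete_down (X : T -> Prop) : Prop :=
  forall C : T -> Prop, nonempty C -> is_chain C -> (forall c, C c -> X c) ->
    exists m, is_inf C m /\ X m.

(* F x y means y \in F(x) *)
Definition lower_V_ascending (F : T -> T -> Prop) : Prop :=
  forall x x' y y', x < x' -> F x y -> F x' y' -> F x (y `&` y').

End Defs.

(* Let A be the set of subfixed points x (some y in F(x) lies below x), s = inf A
   (A contains the top element). Pick a minimal element m of F(s), which exists
   by Zorn's lemma since F(s) is chain-subcomplete downwards. If s were not in A,
   then s < x for every x in A, and lower V-ascendancy puts m `&` y in F(s) for
   every y in F(x), so m <= y by minimality; taking y <= x gives m <= s, i.e.
   s in A after all. Hence some m in F(s) has m <= s; if m < s, V-ascendancy
   applied to m < s yields m in A, contradicting s = inf A, so s in F(s). Every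
   fixed point lies in A, hence above s. *)
From mathcomp Require Import all_boot all_order.
From mathcomp Require classical_sets boolp.
Import Order.TTheory.
Local Open Scope order_scope.

Lemma chain_subcomplete_down_minimal {d : Order.disp_t} {T : latticeType d}
    {X : T -> Prop} :
  nonempty X -> chain_subcomplete_down X ->
  exists m, X m /\ forall z, X z -> z <= m -> z = m.
Proof.
move=> [x0 Xx0] Xcomplete.
pose R (a b : {z : T | X z}) := proj1_sig b <= proj1_sig a.
have [t t_max] : exists t, forall s, R t s -> s = t.
  apply: classical_sets.Zorn => [t|r s t|s t|A A_chain].
  - exact: lexx.
  - by move=> rs st; exact: le_trans st rs.
  - move=> st ts; apply: eq_sig_hprop => [z|]; first exact: boolp.Prop_irrelevance.
    exact/le_anti/andP.
  - case: (boolp.pselect (exists a, A a)) => [[a Aa]|A0]; last first.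
      by exists (exist _ x0 Xx0) => s As; case: A0; exists s.
    pose C c := exists a, A a /\ proj1_sig a = c.
    have [|||m [[m_lb _] Xm]] := Xcomplete C.
    + by exists (proj1_sig a), a.
    + move=> _ _ [a1 [A1 <-]] [a2 [A2 <-]].
      by case: (A_chain a1 a2 A1 A2); [right|left].
    + by move=> _ [b [_ <-]]; exact: proj2_sig.
    by exists (exist _ m Xm) => s As; apply: m_lb; exists s.
exists (proj1_sig t); split; first exact: proj2_sig.
by move=> z Xz zt; have /(f_equal (@proj1_sig _ _)) := t_max (exist _ z Xz) zt.
Qed.

Section LeastFixedPoint.
Context {d : Order.disp_t} {T : latticeType d} (F : T -> T -> Prop).
Hypothesis F_V_ascending : lower_V_ascending F.
Hypothesis F_nonempty : forall x, nonempty (F x).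

Definition subfixed (x : T) : Prop := exists y, F x y /\ y <= x.

Lemma fixed_subfixed x : F x x -> subfixed x.
Proof. by exists x. Qed.

Lemma inf_subfixed_subfixed s :
  chain_subcomplete_down (F s) -> is_inf subfixed s -> subfixed s.
Proof.
move=> Fs_complete [s_lb s_glb]; apply: boolp.contrapT => s_not_subfixed.
have [m [Fsm m_min]] := chain_subcomplete_down_minimal (F_nonempty s) Fs_complete.
apply: (s_not_subfixed); exists m; split => //.
apply: s_glb => x [y [Fxy yx]].
have sx : s < x.
  rewrite lt_neqAle s_lb ?andbT; last by exists y.
  by apply/eqP => esx; apply: s_not_subfixed; rewrite esx; exists y.
have <- : m `&` y = m.
  by apply: m_min; [exact: F_V_ascending sx Fsm Fxy | exact: leIl].
exact: le_trans (leIr _ _) yx.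
Qed.

Lemma least_subfixed_fixed s :
  is_lower_bound subfixed s -> subfixed s -> F s s.
Proof.
move=> s_lb [m [Fsm]]; rewrite le_eqVlt => /orP[/eqP m_eq_s | ms_lt].
  by rewrite -{2}m_eq_s.
have [y Fmy] := F_nonempty m.
have subfixed_m : subfixed m.
  by exists (y `&` m); split; [exact: F_V_ascending ms_lt Fmy Fsm | exact: leIr].
by rewrite (le_gtF (s_lb _ subfixed_m)) in ms_lt.
Qed.

End LeastFixedPoint.

Theorem lemma2p9 (d : Order.disp_t) (T : latticeType d) (F : T -> T -> Prop) :
  (exists x : T, True) ->
  complete_lattice (T := T) ->
  lower_V_ascending F ->
  (forall x, nonempty (F x)) ->
  (forall x, chain_subcomplete_down (F x)) ->
  exists s, F s s /\ (forall t, F t t -> s <= t).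
Proof.
move=> [x0 _] T_complete F_V_ascending F_nonempty F_complete.
have [[top [top_ub _]] _] := T_complete (fun _ => True) (ex_intro _ x0 I).
have subfixed_top : subfixed F top.
  by have [y Fy] := F_nonempty top; exists y; split; last exact: top_ub.
have [_ [s s_inf]] := T_complete _ (ex_intro _ top subfixed_top).
have subfixed_s : subfixed F s.
  exact: inf_subfixed_subfixed F_V_ascending F_nonempty s (F_complete s) s_inf.
exists s; split.
  exact: least_subfixed_fixed F_V_ascending F_nonempty s s_inf.1 subfixed_s.
by move=> t Ftt; apply: s_inf.1; exact: fixed_subfixed.
Qed.
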